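(* Fix an integer $r \geq 2$. There exist constants $\alpha > 0$ and $C' > 0$ such that for all integers $n \geq 1$, $m \leq n$ and $2 \leq k \leq m$, the probability that a random DFA with $n$ states over an alphabet of size $r$ contains a $k$-periodic closed communicating class of size $m$ is at most $C' e^{-\alpha m}$.
   Context: A DFA is a tuple $A = \langle \Sigma, Q, q_0, \tau, \phi\rangle$ with finite alphabet $\Sigma$, finite state set $Q$, initial state $q_0$, transition function $\tau : Q \times \Sigma \to Q$ and termination function $\phi : Q \to \{0,1\}$. Extend $\tau$ to strings as usual and write $\tau_\star(S) = \{\tau(q,x) : q \in S, x \in \Sigma^\star\}$ and $\tau_1(S) = \{\tau(q,\sigma): q \in S, \sigma \in \Sigma\}$ for $S \subseteq Q$. Two states communicate if each is reachable from the other by some string; the equivalence classes are communicating classes. A communicating class $Q'$ is closed if $\tau_\star(Q') = Q'$. For $k > 1$, a closed communicating class $Q'$ is $k$-periodic if there is a partition of $Q'$ into $k$ nonempty parts $Q'_0,\ldots,Q'_{k-1}$ with $\tau_1(Q'_i) = Q'_{(i+1) \bmod k}$ for all $i$. A random DFA with $n$ states over an alphabet $\Sigma$ of size $r$: $Q = [n]$, initial state uniform in $Q$, each $\tau(q,\sigma)$ uniform in $Q$, each $\phi(q)$ uniform in $\{0,1\}$, all independent. *)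

From Stdlib Require Import Reals ClassicalEpsilon.
From mathcomp Require Import all_boot.
Set Implicit Arguments. Unset Strict Implicit. Unset Printing Implicit Defensive.

(* States Q = 'I_n, alphabet Sigma = 'I_r. A DFA is (q0, tau, phi). *)
Definition trans (n r : nat) := {ffun 'I_n * 'I_r -> 'I_n}.
Definition dfa (n r : nat) : finType :=
  ('I_n * {ffun 'I_n * 'I_r -> 'I_n} * {ffun 'I_n -> bool})%type.

Section DFA.
Variables (n r : nat) (tau : trans n r).

Definition tau_star (q : 'I_n) (x : seq 'I_r) : 'I_n :=
  foldl (fun p s => tau (p, s)) q x.

Definition reachable (p q : 'I_n) : Prop := exists x : seq 'I_r, tau_star p x = q.
Definition communicate (p q : 'I_n) : Prop := reachable p q /\ reachable q p.

Definition comm_class (S : {set 'I_n}) : Prop :=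
  exists p : 'I_n, forall q, q \in S <-> communicate p q.

Definition closed_set (S : {set 'I_n}) : Prop :=
  forall q, (exists p x, p \in S /\ tau_star p x = q) <-> q \in S.

Definition tau1 (S : {set 'I_n}) : {set 'I_n} :=
  [set tau ps | ps in setX S [set: 'I_r]].

Definition periodic (k : nat) (S : {set 'I_n}) : Prop :=
  (1 < k)%N /\
  exists P : nat -> {set 'I_n},
    (forall i, (i < k)%N -> P i != set0) /\
    (forall i j, (i < k)%N -> (j < k)%N -> i <> j -> [disjoint P i & P j]) /\
    S = \bigcup_(i < k) P i /\
    (forall i, (i < k)%N -> tau1 (P i) = P ((i + 1) %% k)).

Definition has_periodic_class (m k : nat) : Prop :=
  exists S : {set 'I_n},
    comm_class S /\ closed_set S /\ periodic k S /\ #|S| = m.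
End DFA.

Definition pb (P : Prop) : bool :=
  if excluded_middle_informative P then true else false.

(* probability under the uniform random DFA (q0, tau, phi all uniform, independent) *)
Definition prob_periodic (n r m k : nat) : R :=
  Rdiv (INR #|[set A : dfa n r | pb (has_periodic_class A.1.2 m k)]|)
       (INR #|[set: dfa n r]|).

From Stdlib Require Import Reals Lra.
From mathcomp Require Import all_boot all_order all_algebra zify.
From Coquelicot Require Import Coquelicot.
Import GRing.Theory Num.Theory.
Open Scope nat_scope.
Set Implicit Arguments. Unset Strict Implicit. Unset Printing Implicit Defensive.

(* Colour the states of a k-periodic closed class S of size m by the parity of
   the index of their part, giving the last part a third colour.  Then the
   letters 0 and 1 send each state of S to two states of S sharing a colour
   different from its own.  For fixed S and colouring, a state t has at most
   s_t such pairs of targets, where \sum_t s_t <= m^3 / 4, so by AM-GM at most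
   (m^2 / 4)^m n^(r n - 2 m) transition functions are compatible.  Summing over
   the 'C(n, m) 3^m choices bounds the probability by (3/4)^m 'C(n, m) (m/n)^(2m),
   and the entropy bound on 'C(n, m) with an elementary logarithmic inequality
   gives 'C(n, m) (m/n)^(2m) <= (33/25)^m < (4/3)^m. *)

Lemma AGM_nat (T : finType) (A : {pred T}) (E : T -> nat) :
  #|A| ^ #|A| * \prod_(i in A) E i <= (\sum_(i in A) E i) ^ #|A|.
Proof.
have [A0|A_gt0] := posnP #|A|.
  by rewrite A0 !expn0 mul1n (big_pred0 _ _ _ _ (card0_eq A0)).
have := Order.le_of_leif (@leif_AGM rat T A (fun i => ((E i)%:R)%R) (fun i _ => ler0n _ _)).
rewrite -natr_prod -natr_sum /= expr_div_n ler_pdivlMr ?exprn_gt0 ?ltr0n //.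
by rewrite -!natrX -natrM ler_nat mulnC.
Qed.

Section ColorPairs.
Variables (n : nat) (S : {set 'I_n}) (g : {ffun 'I_n -> 'I_3}).

Definition same_color_pairs (t : 'I_n) :=
  #|[set p : 'I_n * 'I_n | [&& p.1 \in S, p.2 \in S, g p.1 == g p.2 & g p.1 != g t]]|.

Definition color_class (x : 'I_n) := #|[set y in S | g y == g x]|.

Lemma same_color_pairsE t :
  same_color_pairs t = \sum_(x in S | g x != g t) color_class x.
Proof.
rewrite /same_color_pairs (eq_bigr (fun x => \sum_(y in S | g y == g x) 1)); last first.
  by move=> x _; rewrite /color_class -sum1_card; apply: eq_bigl => y; rewrite !inE.
rewrite pair_big_dep /= -sum1_card; apply: eq_bigl => -[x y] /=.
rewrite !inE /= [g y == g x]eq_sym.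
by case: (x \in S); case: (y \in S); case: (g x == g y); case: (g x != g t).
Qed.

(* Exchanging the sums gives \sum_x b_x (m - b_x) with b_x = color_class x,
   and b (m - b) <= m^2 / 4. *)
Lemma sum_same_color_pairs_le : 4 * \sum_(t in S) same_color_pairs t <= #|S| ^ 3.
Proof.
have -> : \sum_(t in S) same_color_pairs t
          = \sum_(x in S) color_class x * (#|S| - color_class x).
  under eq_bigr do rewrite same_color_pairsE.
  rewrite (exchange_big_dep (mem S)) /=; last by move=> ? ? ? /andP[].
  apply: eq_bigr => x xS; rewrite sum_nat_const mulnC; congr (_ * _).
  rewrite -(cardsID [set t | g t == g x] S) /color_class.
  have -> : S :&: [set t | g t == g x] = [set y in S | g y == g x].
    by apply/setP => y; rewrite !inE.
  by rewrite addKn; apply: eq_card => t; rewrite unfold_in /= xS !inE eq_sym andbC.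
rewrite big_distrr /= expnS -sum_nat_const leq_sum // => x xS.
have : color_class x <= #|S| by apply: subset_leq_card; apply/subsetP => y; rewrite inE => /andP[].
move: (color_class x) (#|S|) => b M /subnKC {2}<-.
exact: (nat_AGM2 b (M - b)).1.
Qed.

Lemma prod_same_color_pairs_le :
  4 ^ #|S| * \prod_(t in S) same_color_pairs t <= #|S| ^ (2 * #|S|).
Proof.
set m := #|S|; have [m0|m_gt0] := posnP m.
  by rewrite m0 (big_pred0 _ _ _ _ (card0_eq m0)).
rewrite -(@leq_pmul2l (m ^ m)) ?expn_gt0 ?m_gt0 // mulnCA.
apply: leq_trans (leq_mul (leqnn _) (AGM_nat (mem S) same_color_pairs)) _.
rewrite -/m -expnMn -expnD -[m + 2 * m]/(3 * m) expnM leq_exp2r //.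
exact: sum_same_color_pairs_le.
Qed.

End ColorPairs.

Section Coloring.
Variables (n r : nat) (s0 s1 : 'I_r).

Definition colored_steps (S : {set 'I_n}) (g : {ffun 'I_n -> 'I_3}) (tau : trans n r) :=
  [forall t in S, [&& tau (t, s0) \in S, tau (t, s1) \in S,
     g (tau (t, s0)) == g (tau (t, s1)) & g (tau (t, s0)) != g t]].

(* Parts alternate between colours 0 and 1; the last part gets colour 2, so
   that the wrap-around from part k-1 to part 0 also changes colour. *)
Definition part_color (k i : nat) : 'I_3 := if i == k.-1 then inord 2 else inord (odd i).

Lemma part_color_succ k i : 1 < k -> i < k -> part_color k ((i + 1) %% k) != part_color k i.
Proof.
move=> hk hi; rewrite /part_color.
have [->|nei] := eqVneq i k.-1.
  rewrite addn1 prednK ?modnn; last exact: ltn_trans hk.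
  have -> : (0 == k.-1) = false by lia.
  by apply/eqP => /(congr1 val); rewrite /= !inordK.
have hi1 : i + 1 < k by move: hi nei; case: k {hk} => //= k'; lia.
rewrite (modn_small hi1); case: ifP => _.
  by apply/eqP => /(congr1 val); rewrite /= !inordK //; case: odd.
by apply/eqP => /(congr1 val); rewrite /= !inordK ?addn1 //=; case: odd.
Qed.

Lemma periodic_class_colored m k (tau : trans n r) :
  has_periodic_class tau m k ->
  exists (S : {set 'I_n}) (g : {ffun 'I_n -> 'I_3}),
    [/\ #|S| = m, g \in pffun_on ord0 S predT & colored_steps S g tau].
Proof.
move=> [S [_ [_ [[hk [P [_ [Pdis [SP Ptau]]]]] cardS]]]].
pose g := [ffun t => if [pick i : 'I_k | t \in P i] is Some i then part_color k i else ord0].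
have gP t i : i < k -> t \in P i -> g t = part_color k i.
  move=> ik ti; rewrite /g ffunE; case: pickP => [j tj|/(_ (Ordinal ik))]; last by rewrite ti.
  have [<- //|ne] := eqVneq (j : nat) i.
  by have /disjointFr/(_ tj) := Pdis _ _ (ltn_ord j) ik (elimN eqP ne); rewrite ti.
have inS t : reflect (exists2 i, i < k & t \in P i) (t \in S).
  rewrite SP; apply: (iffP bigcupP) => [[i _ ti]|[i ik ti]]; first by exists i.
  by exists (Ordinal ik).
exists S, g; split => //.
  apply/pffun_onP; split=> // ; apply/subsetP => t; rewrite !inE /g ffunE.
  case: pickP => [i ti _|//]; by apply/inS; exists i.
apply/forall_inP => t /inS [i ik ti].
have jk : (i + 1) %% k < k by rewrite ltn_pmod //; lia.
have tauP s : tau (t, s) \in P ((i + 1) %% k).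
  by rewrite -(Ptau _ ik); apply: imset_f; rewrite in_setX ti in_setT.
have tauS s : tau (t, s) \in S by apply/inS; exists ((i + 1) %% k).
rewrite !tauS !(gP _ _ jk (tauP _)) (gP _ _ ik ti) eqxx /=.
exact: part_color_succ.
Qed.

Hypothesis s01 : s0 != s1.
Variable q0 : 'I_n.

(* The values on s0, s1 are overwritten by the dummy state q0, so that the
   second component ranges over a set of size n ^ (n * (r - 2)). *)
Definition split_trans (tau : trans n r) :
    {ffun 'I_n -> 'I_n * 'I_n} * {ffun 'I_n * 'I_r -> 'I_n} :=
  ([ffun t => (tau (t, s0), tau (t, s1))],
   [ffun p => if (p.2 == s0) || (p.2 == s1) then q0 else tau p]).

Lemma split_trans_inj : injective split_trans.
Proof.
move=> tau1 tau2 [e1 e2]; apply/ffunP => -[t s].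
have /= := congr1 (fun f : {ffun 'I_n -> 'I_n * 'I_n} => f t) e1; rewrite !ffunE => -[e10 e11].
have [->|ne0] := eqVneq s s0; first by [].
have [->|ne1] := eqVneq s s1; first by [].
have := congr1 (fun f : {ffun 'I_n * 'I_r -> 'I_n} => f (t, s)) e2.
by rewrite !ffunE /= (negbTE ne0) (negbTE ne1).
Qed.

Lemma card_colored_steps (S : {set 'I_n}) (g : {ffun 'I_n -> 'I_3}) :
  #|[set tau | colored_steps S g tau]| <=
    (\prod_(t in S) same_color_pairs S g t) * n ^ (2 * (n - #|S|)) * n ^ (n * (r - 2)).
Proof.
pose A t : pred ('I_n * 'I_n) :=
  if t \in S then [pred p | [&& p.1 \in S, p.2 \in S, g p.1 == g p.2 & g p.1 != g t]]
  else predT.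
pose B (p : 'I_n * 'I_r) : pred 'I_n :=
  if (p.2 == s0) || (p.2 == s1) then pred1 q0 else predT.
rewrite -(card_imset _ split_trans_inj).
apply: leq_trans (subset_leq_card (B := [predX family A & family B]) _) _.
  apply/subsetP => y /imsetP [tau]; rewrite inE => /forall_inP steps ->.
  rewrite inE /=; apply/andP; split; apply/familyP => x; rewrite !ffunE.
    by rewrite /A; case: ifP => // xS; rewrite inE /= steps.
  by rewrite /B; case: ifP => //; rewrite inE.
rewrite cardX !card_family !foldrE !big_image leq_mul //.
  rewrite (bigID (mem S)) /= leq_mul //.
    by apply: eq_leq; apply: eq_bigr => t tS; rewrite /A tS; apply: eq_card => p; rewrite inE.
  rewrite (eq_bigr (fun _ => n * n)); last first.
    move=> t tS; rewrite /A (negbTE tS) (eq_card (B := {: 'I_n * 'I_n})) //.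
    by rewrite card_prod card_ord.
  have cSC : #|[predC S]| = n - #|S| by rewrite -[X in X - _](card_ord n) -(cardC S) addKn.
  by rewrite prod_nat_const mulnn -expnM -cSC; apply: eq_leq; congr (_ ^ (2 * _)); apply: eq_card.
rewrite (eq_bigr (fun p => if ~~ ((p.2 == s0) || (p.2 == s1)) then n else 1)); last first.
  move=> p _; rewrite /B; case: ifP => _; first by rewrite card1.
  by rewrite -[RHS](card_ord n); apply: eq_card.
rewrite -big_mkcond prod_nat_const; apply: eq_leq; congr (_ ^ _).
have := cardsC [set s0; s1]; rewrite cards2 s01 card_ord => hc.
have -> : r - 2 = #|~: [set s0; s1]| by rewrite -[in LHS]hc addKn.
have -> : n * #|~: [set s0; s1]| = #|setX [set: 'I_n] (~: [set s0; s1])|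
  by rewrite cardsX cardsT card_ord.
apply: eq_card => -[t s].
by rewrite !inE.
Qed.

End Coloring.

Lemma pbP (P : Prop) : pb P -> P.
Proof. by rewrite /pb; case: ClassicalEpsilon.excluded_middle_informative. Qed.

Lemma card_periodic_le_sum n r m k (s0 s1 : 'I_r) :
  #|[set tau : trans n r | pb (has_periodic_class tau m k)]| <=
  \sum_(S : {set 'I_n} | #|S| == m) \sum_(g in pffun_on (ord0 : 'I_3) S predT)
    #|[set tau | colored_steps s0 s1 S g tau]|.
Proof.
set bad := [set tau : trans n r | _].
set sumSg := fun tau => \sum_(S : {set 'I_n} | #|S| == m)
  \sum_(g in pffun_on (ord0 : 'I_3) S predT) (colored_steps s0 s1 S g tau : nat).
apply: (@leq_trans (\sum_tau sumSg tau)).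
  rewrite -sum1_card [X in _ <= X](bigID (mem bad)) /=.
  apply: leq_trans (leq_addr _ _); apply: leq_sum => tau; rewrite inE => /pbP.
  move=> /(periodic_class_colored s0 s1) [S [g [cS gS steps]]].
  rewrite /sumSg (bigD1 S) ?cS //= (bigD1 g) //= steps.
  exact: leq_trans (leq_addr _ _) (leq_addr _ _).
rewrite exchange_big; apply: leq_sum => S _; rewrite exchange_big; apply: leq_sum => g _.
rewrite -sum1_card [X in _ <= X]big_mkcond; apply: eq_leq; apply: eq_bigr => tau _.
by rewrite inE; case: colored_steps.
Qed.

Lemma card_periodic_trans_le n r m k : 1 < r -> 0 < n -> m <= n ->
  #|[set tau : trans n r | pb (has_periodic_class tau m k)]| * 4 ^ m * n ^ (2 * m)
    <= 'C(n, m) * 3 ^ m * m ^ (2 * m) * n ^ (r * n).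
Proof.
move=> hr hn hm.
pose s0 : 'I_r := Ordinal (ltnW hr); pose s1 : 'I_r := Ordinal hr.
pose K := m ^ (2 * m) * n ^ (2 * (n - m)) * n ^ (n * (r - 2)).
have colored_le (S : {set 'I_n}) (g : {ffun 'I_n -> 'I_3}) :
    #|S| = m -> #|[set tau | colored_steps s0 s1 S g tau]| * 4 ^ m <= K.
  move=> cS; have s01 : s0 != s1 by [].
  apply: leq_trans (leq_mul (card_colored_steps s01 (Ordinal hn) S g) (leqnn _)) _.
  by rewrite /K mulnC !mulnA -cS !leq_mul // prod_same_color_pairs_le.
have card_colorings (S : {set 'I_n}) :
    #|S| = m -> #|pffun_on (ord0 : 'I_3) S predT| = 3 ^ m.
  by move=> cS; rewrite card_pffun_on cS (eq_card (B := 'I_3)) ?card_ord.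
have bad_le : #|[set tau : trans n r | pb (has_periodic_class tau m k)]| * 4 ^ m
              <= 'C(n, m) * 3 ^ m * K.
  apply: leq_trans (leq_mul (card_periodic_le_sum n m k s0 s1) (leqnn _)) _.
  have -> : 'C(n, m) = \sum_(S : {set 'I_n} | #|S| == m) 1.
    by rewrite sum1_card -cardsE card_draws card_ord.
  rewrite -mulnA !big_distrl /=.
  apply: leq_sum => S /eqP cS.
  rewrite big_distrl /= mul1n -(card_colorings S cS) -sum1_card big_distrl /=.
  by apply: leq_sum => g _; rewrite mul1n colored_le.
apply: leq_trans (leq_mul bad_le (leqnn _)) _.
rewrite /K !mulnA -!mulnA !leq_mul // -!expnD; apply: eq_leq; congr (_ ^ _); nia.
Qed.

Section Estimates.
Local Open Scope R_scope.

(* Any rate strictly between 1/4 and ln (4/3) would do. *)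
Definition binom_growth : R := ln (33/25).

Lemma quarter_lt_binom_growth : / 4 < binom_growth.
Proof.
have exp_quarter : exp (/ 4) < 33/25.
  have e4 : exp (/ 4) ^ 4 = exp 1 by rewrite /= Rmult_1_r -!exp_plus; f_equal; field.
  have := exp_le_3; rewrite -e4 => e3.
  have [//|hge] := Rlt_or_le (exp (/ 4)) (33/25).
  have : (33/25) ^ 4 <= exp (/ 4) ^ 4 by apply: pow_incr; lra.
  simpl in *; lra.
by rewrite /binom_growth -(ln_exp (/ 4)); apply: ln_increasing => //; apply: exp_pos.
Qed.

(* The difference of the two sides vanishes at 1 and has derivative
   binom_growth + 1/x^2 - 1/x >= binom_growth - 1/4 > 0. *)
Lemma ln_le_binom_growth (v : R) :
  1 <= v -> ln v <= (v - 1) * (binom_growth + / v).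
Proof.
move=> hv; have [->|hv1] := Req_dec v 1; first by rewrite ln_1; lra.
pose f x := binom_growth * x - binom_growth + 1 - / x - ln x.
have : f 1 < f v.
  apply: (incr_function_le f (Finite 1) p_infty
            (fun x => binom_growth + / (x * x) - / x)) => //=; try lra.
  - by move=> x hx _; rewrite /f; auto_derive; [repeat split; lra | field; lra].
  - move=> x hx _; have := quarter_lt_binom_growth.
    have -> : / (x * x) = / x * / x by field; lra.
    have := Rle_0_sqr (/ x - / 2); rewrite /Rsqr /Rgt; lra.
rewrite /f ln_1.
have -> : (v - 1) * (binom_growth + / v) = binom_growth * v - binom_growth + 1 - / v
  by field; lra.
lra.
Qed.

Lemma ln_le_sub1 (x : R) : 0 < x -> ln x <= x - 1.
Proof. by move=> hx; have := exp_ineq1_le (ln x); rewrite exp_ln; lra. Qed.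

Lemma ln_le_inv (x y : R) : 0 < x -> 0 < y -> ln x <= ln y -> x <= y.
Proof.
move=> hx hy hle; have [//|hlt] := Rle_or_lt x y.
by have := ln_increasing _ _ hy hlt; lra.
Qed.

(* With v = (M + J) / J the two logarithmic bounds combine so that the
   terms M / (M + J) cancel. *)
Lemma entropy_ln_le {M J : R} : 0 < M -> 0 < J ->
  M * ln (M / (M + J)) + J * ln ((M + J) / J) <= binom_growth * M.
Proof.
move=> hM hJ.
have h1 : ln (M / (M + J)) <= M / (M + J) - 1
  by apply: ln_le_sub1; apply: Rdiv_lt_0_compat; lra.
have h2 : ln ((M + J) / J) <= ((M + J) / J - 1) * (binom_growth + / ((M + J) / J)).
  apply: ln_le_binom_growth; apply: (Rmult_le_reg_r J) => //.
  by rewrite /Rdiv Rmult_assoc Rinv_l; lra.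
have e2 : ((M + J) / J - 1) * (binom_growth + / ((M + J) / J))
          = M / J * binom_growth + M / (M + J) by field; lra.
rewrite e2 in h2.
have := Rmult_le_compat_l M _ _ (Rlt_le _ _ hM) h1.
have := Rmult_le_compat_l J _ _ (Rlt_le _ _ hJ) h2.
have -> : J * (M / J * binom_growth + M / (M + J)) = M * binom_growth + J * (M / (M + J))
  by field; lra.
have -> : M * (M / (M + J) - 1) = - (J * (M / (M + J))) by field; lra.
lra.
Qed.

Lemma INR_expn (a b : nat) : INR (a ^ b)%N = INR a ^ b.
Proof. by elim: b => [|b IH]; rewrite ?expn0 // expnS mult_INR IH. Qed.

Lemma ln_div (x y : R) : 0 < x -> 0 < y -> ln (x / y) = ln x - ln y.
Proof.
by move=> hx hy; rewrite /Rdiv ln_mult ?ln_Rinv //; apply: Rinv_0_lt_compat.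
Qed.

Lemma entropy_pow_le {m} (j : nat) : (0 < m)%N ->
  INR m ^ m * INR (m + j) ^ j
  <= exp (binom_growth * INR m) * (INR j ^ j * INR (m + j) ^ m).
Proof.
move=> m_gt0; have hM : 0 < INR m by apply: lt_0_INR; apply/ssrnat.ltP.
have hc := quarter_lt_binom_growth.
have [->|j_gt0] := posnP j.
  rewrite addn0 /= Rmult_1_r Rmult_1_l.
  have := exp_ineq1_le (binom_growth * INR m).
  have : 0 <= binom_growth * INR m by apply: Rmult_le_pos; lra.
  have := pow_lt _ m hM; nra.
have hJ : 0 < INR j by apply: lt_0_INR; apply/ssrnat.ltP.
rewrite plus_INR; move: hM hJ; set M := INR m; set J := INR j => hM hJ.
have hMJ : 0 < M + J by lra.
apply: ln_le_inv.
- by apply: Rmult_lt_0_compat; apply: pow_lt.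
- by apply: Rmult_lt_0_compat; [apply: exp_pos | apply: Rmult_lt_0_compat; apply: pow_lt].
rewrite !ln_mult ?ln_exp ?ln_pow //; try (by apply: pow_lt); try apply: exp_pos;
  last by apply: Rmult_lt_0_compat; apply: pow_lt.
have := entropy_ln_le hM hJ; rewrite !ln_div // -/M -/J; lra.
Qed.

(* One term of the binomial expansion of n ^ n = (m + (n - m)) ^ n. *)
Lemma bin_entropy_leq {n m : nat} : (m <= n)%N ->
  ('C(n, m) * (m ^ m * (n - m) ^ (n - m)) <= n ^ n)%N.
Proof.
move=> hm; have hi : (n - m < n.+1)%N by rewrite ltnS leq_subr.
rewrite -{3 4}(subnKC hm) expnDn (bigD1 (Ordinal hi)) //= bin_sub // subKn //.
by rewrite addKn leq_addr.
Qed.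

Lemma bin_pow_le_exp (n m : nat) : (m <= n)%N ->
  INR 'C(n, m) * INR m ^ (2 * m) <= exp (binom_growth * INR m) * INR n ^ (2 * m).
Proof.
move=> hm; have [->|m_gt0] := posnP m.
  by rewrite bin0 /= Rmult_0_r exp_0; lra.
have hJ : 0 < INR (n - m) ^ (n - m).
  by rewrite -INR_expn; apply: lt_0_INR; apply/ssrnat.ltP; rewrite expn_gt0 orbC; case: (n - m)%N.
have /ssrnat.leP/le_INR := bin_entropy_leq hm; rewrite !mult_INR !INR_expn => hbin.
have hent := entropy_pow_le (n - m) m_gt0; rewrite (subnKC hm) in hent.
have e2m (x : R) : x ^ (2 * m) = x ^ m * x ^ m by rewrite -pow_add; congr (_ ^ _); lia.
have en : INR n ^ n = INR n ^ m * INR n ^ (n - m) by rewrite -pow_add; congr (_ ^ _); lia.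
apply: (Rmult_le_reg_r _ _ _ hJ); rewrite !e2m; rewrite en in hbin.
have hm0 : 0 <= INR m ^ m by apply: pow_le; apply: pos_INR.
have hn0 : 0 <= INR n ^ m by apply: pow_le; apply: pos_INR.
apply: (Rle_trans _ (INR n ^ m * (INR m ^ m * INR n ^ (n - m)))).
  have := Rmult_le_compat_r _ _ _ hm0 hbin; lra.
have := Rmult_le_compat_l _ _ _ hn0 hent; lra.
Qed.

Lemma exp_ln_sub_mul (a c : R) (m : nat) : 0 < a ->
  exp (- ((ln a - c) * INR m)) = (/ a) ^ m * exp (c * INR m).
Proof.
move=> ha; rewrite Ropp_mult_distr_l Ropp_minus_distr Rmult_minus_distr_r exp_plus Rmult_comm.
rewrite Ropp_mult_distr_l -ln_Rinv // [ln _ * _]Rmult_comm -ln_pow ?exp_ln //.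
  by apply: pow_lt; apply: Rinv_0_lt_compat.
exact: Rinv_0_lt_compat.
Qed.

End Estimates.

Lemma prob_periodicE n r m k : 0 < n ->
  prob_periodic n r m k =
  Rdiv (INR #|[set tau : trans n r | pb (has_periodic_class tau m k)]|) (INR (n ^ (n * r))).
Proof.
move=> hn; rewrite /prob_periodic.
have -> : #|[set A : dfa n r | pb (has_periodic_class A.1.2 m k)]| =
          #|setX (setX [set: 'I_n] [set tau : trans n r | pb (has_periodic_class tau m k)])
                 [set: {ffun 'I_n -> bool}]|.
  by apply: eq_card => -[[q tau] f]; rewrite !inE andbT.
rewrite cardsT !cardsX !cardsT !card_prod !card_ffun card_prod card_bool !card_ord !mult_INR.
have INR_expn_gt0 a b : 0 < a -> Rlt 0 (INR (a ^ b)).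
  by move=> ha; apply: lt_0_INR; apply/ssrnat.ltP; rewrite expn_gt0 ha.
have := INR_expn_gt0 2 n isT; have := INR_expn_gt0 _ (n * r) hn.
have : Rlt 0 (INR n) by apply: lt_0_INR; apply/ssrnat.ltP.
by move=> *; field; lra.
Qed.

Open Scope R_scope.

Theorem lemma3 (r : nat) (hr : (2 <= r)%N) :
  exists alpha C' : R, Rlt 0 alpha /\ Rlt 0 C' /\
    forall n m k : nat, (1 <= n)%N -> (m <= n)%N -> (2 <= k)%N -> (k <= m)%N ->
      Rle (prob_periodic n r m k) (Rmult C' (exp (Ropp (Rmult alpha (INR m))))).
Proof.
exists (ln (4/3) - binom_growth), 1; split; [|split; [lra|]].
  by have := ln_increasing (33/25) (4/3); rewrite /binom_growth; lra.
move=> n m k hn hm _ _.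
have hN : 0 < INR n by apply: lt_0_INR; apply/ssrnat.ltP.
have /ssrnat.leP/le_INR := card_periodic_trans_le k hr hn hm.
rewrite !mult_INR !INR_expn => hcount.
have hbin := bin_pow_le_exp hm.
rewrite prob_periodicE // INR_expn Rmult_1_l exp_ln_sub_mul ?Rinv_div; try lra.
apply/Rle_div_l; first exact: (pow_lt _ _ hN).
have h4n : 0 < INR 4 ^ m * INR n ^ (2 * m) by apply: Rmult_lt_0_compat; apply: pow_lt; simpl; lra.
apply: (Rmult_le_reg_r _ _ _ h4n).
have -> : (3/4) ^ m * exp (binom_growth * INR m) * INR n ^ (n * r) * (INR 4 ^ m * INR n ^ (2 * m))
          = INR 3 ^ m * INR n ^ (r * n) * (exp (binom_growth * INR m) * INR n ^ (2 * m)).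
  have -> : INR 3 = 3/4 * INR 4 by simpl; lra.
  by rewrite mulnC Rpow_mult_distr; ring.
apply: Rle_trans (_ : _ <= INR 3 ^ m * INR n ^ (r * n) * (INR 'C(n, m) * INR m ^ (2 * m))) _.
  by move: hcount; lra.
apply: Rmult_le_compat_l hbin.
by apply: Rmult_le_pos; apply: pow_le; apply: pos_INR.
Qed.
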